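(* Let $q>1$ and let $\Pi,\Pi'\sim\mathrm{Mallows}(\mathbb{N},1/q)$ be independent. Define $T_1:=\inf\{j\ge1:\Pi([j])=\Pi'([j])=[j]\}$, where $[j]=\{1,\dots,j\}$. Then $\mathbb{E}\,T_1^2<\infty$.
   Context: For $0<p<1$, $\Pi\sim\mathrm{Mallows}(\mathbb{N},p)$ is the random injection $\mathbb{N}\to\mathbb{N}$ constructed as follows: let $Z_1,Z_2,\dots$ be i.i.d. geometric with $\mathbb{P}(Z_i=k)=(1-p)p^{k-1}$, $k\ge1$; set $\Pi(1)=Z_1$ and, for $i>1$, let $\Pi(i)$ be the $Z_i$-th smallest element of $\mathbb{N}\setminus\{\Pi(1),\dots,\Pi(i-1)\}$. *)

From mathcomp Require Import all_boot all_order all_algebra.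
From mathcomp Require Import all_classical all_reals all_analysis.
Set Implicit Arguments. Unset Strict Implicit. Unset Printing Implicit Defensive.
Import Order.TTheory GRing.Theory Num.Theory.
Local Open Scope classical_set_scope.
Local Open Scope ring_scope.

Definition geom_pmf (R : realType) (p : R) (k : nat) : R :=
  if k is k'.+1 then (1 - p) * p ^+ k' else 0.

(* The k-th smallest (k >= 1) element of {1,2,...} \ used.  It is at most
   k + size used, so it suffices to search in [1, k + size used]. *)
Definition kth_avail (used : seq nat) (k : nat) : nat :=
  nth 0%N [seq x <- iota 1 (k + size used) | x \notin used] k.-1.

(* Mallows construction.  The geometric variables are indexed from 0:
   Z i plays the role of Z_{i+1} in the paper.
   mallows_prefix Z n = [:: Pi(1); ...; Pi(n)]. *)
Fixpoint mallows_prefix (Z : nat -> nat) (n : nat) : seq nat :=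
  match n with
  | 0 => [::]
  | n'.+1 => let s := mallows_prefix Z n' in rcons s (kth_avail s (Z n'))
  end.

Definition mallows (Z : nat -> nat) (i : nat) : nat := last 0%N (mallows_prefix Z i).

Definition fixes_block (Z : nat -> nat) (j : nat) : bool :=
  all (fun x => x \in iota 1 j) (mallows_prefix Z j) &&
  all (fun x => x \in mallows_prefix Z j) (iota 1 j).

Definition joint_block (Z Z' : nat -> nat) : pred nat :=
  fun j => [&& (0 < j)%N, fixes_block Z j & fixes_block Z' j].

Definition first_joint_block (R : realType) (Z Z' : nat -> nat) : \bar R :=
  match pselect (exists j, joint_block Z Z' j) with
  | left h => ((ex_minn h)%:R)%:E
  | right _ => +oo%E
  end.

Definition mutually_independent (R : realType) (d : measure_display)
  (Omega : measurableType d) (P : probability Omega R) (I : eqType)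
  (X : I -> Omega -> nat) : Prop :=
  (forall i (B : set nat), measurable (X i @^-1` B)) /\
  (forall (F : seq I) (B : I -> set nat), uniq F ->
     P (\bigcap_(i in [set` F]) (X i @^-1` B i)) =
     (\prod_(i <- F) P (X i @^-1` B i))%E).

Definition join_family (Omega : Type) (Z Z' : nat -> Omega -> nat)
  : bool * nat -> Omega -> nat :=
  fun bi => if bi.1 then Z' bi.2 else Z bi.2.

From mathcomp Require Import all_boot all_order all_algebra.
From mathcomp Require Import all_classical all_reals all_analysis.
From mathcomp Require Import measurable_realfun.
From mathcomp Require Import zify ring lra.
Set Implicit Arguments. Unset Strict Implicit. Unset Printing Implicit Defensive.
Import Order.TTheory GRing.Theory Num.Theory.
Import numFieldNormedType.Exports.
Local Open Scope classical_set_scope.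
Local Open Scope ring_scope.

(** Fix s and cut [0, s^2) into the s blocks [k s, (k + 1) s).  Step i of the
   Mallows construction fits into [j] as soon as 1 <= Z_i <= j - i; if this holds
   for all i < j then Pi maps [j] onto itself.  So T_1 <= s^2 unless either some
   Z_i or Z'_i with i < s^2 exceeds s (probability at most 2 s^2 q^-s), or no block
   k has Z_i, Z'_i <= (k + 1) s - i throughout: the blocks are independent and each
   succeeds with probability (prod_(m <= s) (1 - q^-m))^2 >= c^2, where
   c = prod_(m >= 1) (1 - q^-m) > 0, so this has probability at most (1 - c^2)^s.
   Hence T_1^2 <= sum_s (s + 1)^4 1{bad_s} and
   E T_1^2 <= sum_s (s + 1)^4 (2 s^2 q^-s + (1 - c^2)^s) < oo. *)

(** * Mallows prefixes *)

Lemma size_mallows_prefix (z : nat -> nat) n : size (mallows_prefix z n) = n.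
Proof. by elim: n => //= n IH; rewrite size_rcons IH. Qed.

Lemma kth_avail_spec (used : seq nat) k : uniq used -> (0 < k)%N ->
  (1 <= kth_avail used k <= k + size used)%N && (kth_avail used k \notin used).
Proof.
move=> uu k0; rewrite /kth_avail.
set avail := [seq x <- _ | _].
have size_avail : (k.-1 < size avail)%N.
  have used_in_range : (count (mem used) (iota 1 (k + size used)) <= size used)%N.
    rewrite -size_filter; apply: uniq_leq_size => [|x].
      exact/filter_uniq/iota_uniq.
    by rewrite mem_filter => /andP[].
  have := count_predC (mem used) (iota 1 (k + size used)).
  rewrite size_filter size_iota; move: used_in_range k0.
  set c := count _ _; set c' := count _ _.
  have -> : c' = count (fun x => x \notin used) (iota 1 (k + size used)) by [].
  lia.
have := mem_nth 0%N size_avail.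
rewrite mem_filter mem_iota => /andP[-> /andP[-> h]] /=.
by rewrite andbT -ltnS -add1n.
Qed.

Section MallowsPrefix.
Variables (z : nat -> nat) (j : nat).
Hypothesis z_fits : forall i, (i < j)%N -> (1 <= z i <= j - i)%N.

Lemma mallows_prefix_in_block m : (m <= j)%N ->
  uniq (mallows_prefix z m) && all (fun x => x \in iota 1 j) (mallows_prefix z m).
Proof.
elim: m => [|m IH] mj //=.
have /andP[uniq_m all_m] := IH (ltnW mj).
have /andP[z1 z2] := z_fits mj.
have /andP[/andP[r1 r2] r_new] := kth_avail_spec uniq_m z1.
rewrite rcons_uniq all_rcons r_new uniq_m all_m !andbT mem_iota r1 /=.
by rewrite size_mallows_prefix in r2; lia.
Qed.

Lemma fixes_block_of_fits : fixes_block z j.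
Proof.
have /andP[uniq_j all_j] := mallows_prefix_in_block (leqnn j).
rewrite /fixes_block all_j /=.
have size_j : (size (iota 1 j) <= size (mallows_prefix z j))%N.
  by rewrite size_iota size_mallows_prefix.
have [_ eq_j] := uniq_min_size uniq_j (fun x => allP all_j x) size_j.
by apply/allP => x; rewrite eq_j.
Qed.

End MallowsPrefix.

Variant first_joint_block_spec (R : realType) (z z' : nat -> nat) : \bar R -> Prop :=
| FirstJointBlockNone of (forall j, ~ joint_block z z' j) :
    first_joint_block_spec z z' +oo
| FirstJointBlockSome m of joint_block z z' m & (forall j, joint_block z z' j -> (m <= j)%N) :
    first_joint_block_spec z z' (m%:R)%:E.

Lemma first_joint_blockP (R : realType) (z z' : nat -> nat) :
  first_joint_block_spec z z' (first_joint_block R z z').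
Proof.
rewrite /first_joint_block; case: pselect => h.
  by case: ex_minnP => m; constructor.
by constructor => j hj; apply: h; exists j.
Qed.

Lemma first_joint_block_sq_ge0 (R : realType) (z z' : nat -> nat) :
  (0 <= first_joint_block R z z' * first_joint_block R z z')%E.
Proof.
case: first_joint_blockP => [_ | m _ _]; first by rewrite mulyy le0y.
by rewrite -EFinM lee_fin mulr_ge0.
Qed.

(** * Real series *)

Section RealSeries.
Variable R : realType.

Lemma series_EFin_lt_pinfty (u : R ^nat) :
  cvgn (series u) -> (\sum_(s <oo) (u s)%:E < +oo)%E.
Proof.
move=> cu.
have -> : (fun n => \sum_(0 <= k < n) (u k)%:E)%E = EFin \o series u.
  by apply/funext => n; rewrite /= sumEFin.
by rewrite (EFin_lim cu) ltry.
Qed.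

Lemma nneseries_ge_term (u : (\bar R) ^nat) n :
  (forall k, (0 <= u k)%E) -> (u n <= \sum_(k <oo) u k)%E.
Proof.
move=> u0; rewrite (@nneseriesD1 _ _ n) //.
by rewrite leeDl // nneseries_ge0.
Qed.

Lemma bernoulli_ineq (h : R) n : 0 <= h -> 1 + n%:R * h <= (1 + h) ^+ n.
Proof.
move=> h0; elim: n => [|n IH]; first by rewrite mul0r addr0 expr0.
have nh0 : 0 <= n%:R * h by rewrite mulr_ge0.
rewrite exprS -natr1; nra.
Qed.

Lemma exprD1_le (h : R) n : 0 <= h <= 1 -> (1 + h) ^+ n <= 1 + ((2 ^ n)%:R - 1) * h.
Proof.
move=> /andP[h0 h1]; elim: n => [|n IH]; first by rewrite expr0 expn0 subrr mul0r addr0.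
rewrite exprS expnS natrM.
have a0 : 0 <= (2 ^ n)%:R - 1 :> R by rewrite subr_ge0 ler1n expn_gt0.
have p0 : 0 <= (1 + h) ^+ n by rewrite exprn_ge0 //; lra.
have hh : h * h <= h by nra.
move: IH a0; set a := (2 ^ n)%:R => IH a0; nra.
Qed.

(* Dominate by a geometric series of ratio ((1 + h)^k rho), using
   (s + 1) h <= (1 + h)^(s + 1) for h small enough. *)
Lemma cvg_series_poly_geometric k (rho : R) : 0 <= rho < 1 ->
  cvgn (series (fun s : nat => (s.+1)%:R ^+ k * rho ^+ s)).
Proof.
move=> /andP[rho0 rho1].
set a : R := (2 ^ k)%:R.
have a1 : 1 <= a by rewrite ler1n expn_gt0.
set h := (1 - rho) / (2 * a).
have h0 : 0 < h by rewrite divr_gt0 // ?subr_gt0 // mulr_gt0 //; lra.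
have h_a : h * (2 * a) = 1 - rho by rewrite /h divfK //; lra.
have h1 : h <= 1 by nra.
clearbody h.
set theta := (1 + h) ^+ k * rho.
have theta_lt1 : theta < 1.
  have := exprD1_le k (andb_true_intro (conj (ltW h0) h1)); rewrite -/a => up.
  have : theta <= (1 + (a - 1) * h) * rho by rewrite ler_wpM2r.
  nra.
have theta0 : 0 <= theta by rewrite mulr_ge0 // exprn_ge0 //; lra.
apply: (series_le_cvg (v_ := geometric ((1 + h) ^+ k / h ^+ k) theta)).
- by move=> n; rewrite mulr_ge0 // exprn_ge0.
- by move=> n; rewrite /geometric /= mulr_ge0 // ?exprn_ge0 // divr_ge0 // exprn_ge0 //; lra.
- move=> n; rewrite /geometric /= /theta exprMn mulrA ler_wpM2r ?exprn_ge0 //.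
  have nh : ((n.+1)%:R * h) ^+ k <= ((1 + h) ^+ n.+1) ^+ k.
    rewrite lerXn2r ?nnegrE ?mulr_ge0 ?exprn_ge0 //; try lra.
    by have := bernoulli_ineq n.+1 (ltW h0); lra.
  rewrite mulrAC ler_pdivlMr ?exprn_gt0 // -exprMn (le_trans nh) //.
  by rewrite -!exprM -exprD mulSn mulnC.
- by apply: is_cvg_geometric_series; rewrite ger0_norm.
Qed.

Lemma weierstrass_prod_ineq (I : Type) (s : seq I) (a : I -> R) :
  (forall i, 0 <= a i <= 1) -> 1 - \sum_(i <- s) a i <= \prod_(i <- s) (1 - a i).
Proof.
move=> a01; elim: s => [|x s IH]; first by rewrite !big_nil subr0.
rewrite !big_cons; have /andP[ax0 ax1] := a01 x.
have prod0 : 0 <= \prod_(i <- s) (1 - a i).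
  by apply: prodr_ge0 => i _; have /andP[] := a01 i; lra.
have sum0 : 0 <= \sum_(i <- s) a i by apply: sumr_ge0 => i _; have /andP[] := a01 i.
nra.
Qed.

Lemma qpochhammer_bounded_below (p : R) : 0 <= p < 1 ->
  exists2 c, 0 < c & forall n, c <= \prod_(0 <= m < n) (1 - p ^+ m.+1).
Proof.
move=> /andP[p0 p1].
have factor01 m : 0 < 1 - p ^+ m.+1 <= 1.
  have : p ^+ m.+1 <= p by rewrite exprS ler_piMr // exprn_ile1 // ltW.
  by have := exprn_ge0 m.+1 p0; lra.
have factor0 m : 0 <= 1 - p ^+ m.+1 by have /andP[] := factor01 m; lra.
have [M pM] : exists M, p ^+ M.+1 < (1 - p) / 2.
  have : `|p| < 1 by rewrite ger0_norm.
  move=> /cvg_expr /cvgr0Pnorm_lt /(_ ((1 - p) / 2)) [|N _ hN]; first by rewrite divr_gt0 //; lra.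
  exists N; apply: le_lt_trans (hN N (leqnn N)).
  by rewrite ger0_norm ?exprn_ge0 // exprS ler_piMl ?exprn_ge0 // ltW.
set head := \prod_(0 <= m < M) (1 - p ^+ m.+1).
exists (head / 2).
  by rewrite divr_gt0 // prodr_gt0 // => m _; have /andP[] := factor01 m.
have tail_sum n : \sum_(M <= m < M + n) p ^+ m.+1 <= 1 / 2.
  have -> : \sum_(M <= m < M + n) p ^+ m.+1 = p ^+ M.+1 * \sum_(0 <= k < n) p ^+ k.
    rewrite -{1}(add0n M) big_addn addKn mulr_sumr; apply: eq_bigr => k _.
    by rewrite -exprD; congr (_ ^+ _); lia.
  have geom : (\sum_(0 <= k < n) p ^+ k) * (1 - p) = 1 - p ^+ n.
    by rewrite big_mkord -[1 - p]opprB mulrN mulrC -subrX1 opprB.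
  have := exprn_ge0 n p0; have := exprn_ge0 M.+1 p0.
  have : 0 <= \sum_(0 <= k < n) p ^+ k by apply: sumr_ge0 => k _; exact: exprn_ge0.
  move: geom pM; set S := \sum_(_ <= _ < _) _; nra.
move=> n; apply: (@le_trans _ _ (\prod_(0 <= m < M + n) (1 - p ^+ m.+1))).
  rewrite (big_cat_nat (n := M)) ?leq_addr //= -/head ler_pdivrMr //.
  rewrite -mulrA -[X in X <= _]mulr1 ler_wpM2l ?prodr_ge0 //.
  have := weierstrass_prod_ineq (index_iota M (M + n)) (a := fun m => p ^+ m.+1)
    (fun m => andb_true_intro (conj (exprn_ge0 _ p0) (exprn_ile1 _ p0 (ltW p1)))).
  by have := tail_sum n; lra.
rewrite addnC (big_cat_nat (n := n)) ?leq_addr //=.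
rewrite ler_piMr ?prodr_ge0 // prodr_ile1 // => m _.
by have /andP[] := factor01 m; lra.
Qed.

End RealSeries.

(** * Block events *)

Section BlockEvents.
Variables (R : realType) (p : R).
Variables (d : measure_display) (Omega : measurableType d) (P : probability Omega R).
Variable X : bool * nat -> Omega -> nat.
Hypothesis X_indep : mutually_independent P X.
Hypothesis X_geom : forall i k, P (X i @^-1` [set k]) = (geom_pmf p k)%:E.

Definition prob (A : set Omega) : R := fine (P A).

Lemma probE A : measurable A -> P A = (prob A)%:E.
Proof.
move=> mA; rewrite /prob fineK // ge0_fin_numE ?measure_ge0 //.
by rewrite (le_lt_trans (probability_le1 P mA)) // ltry.
Qed.

Lemma prob_le1 A : measurable A -> prob A <= 1.
Proof. by move=> mA; rewrite -lee_fin -probE // probability_le1. Qed.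

Lemma probD A B : measurable A -> measurable B ->
  prob (A `\` B) = prob A - prob (A `&` B).
Proof.
move=> mA mB; have PA_fin : (P A < +oo)%E.
  by rewrite (le_lt_trans (probability_le1 P mA)) // ltry.
have fin_num_P E : measurable E -> P E \is a fin_num by move=> mE; rewrite probE.
by rewrite {1}/prob measureD // fineB //; apply: fin_num_P => //; exact: measurableI.
Qed.

Lemma measurable_X i B : measurable (X i @^-1` B).
Proof. exact: X_indep.1. Qed.

Lemma prob_X_in_range i n : prob (X i @^-1` [set z | (1 <= z <= n)%N]) = 1 - p ^+ n.
Proof.
elim: n => [|n IH].
  rewrite expr0 subrr (_ : _ @^-1` _ = set0) ?/prob ?measure0 //.
  by apply/seteqP; split => w //=; lia.
set E := X i @^-1` [set z | (1 <= z <= n)%N].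
have -> : X i @^-1` [set z | (1 <= z <= n.+1)%N] = E `|` X i @^-1` [set n.+1].
  by apply/seteqP; split => w; rewrite /E /=; [lia | case; lia].
rewrite /prob; have -> : P (E `|` X i @^-1` [set n.+1]) = (P E + P (X i @^-1` [set n.+1]))%E.
  apply: measureU; try exact: measurable_X.
  by apply/seteqP; split => w //; rewrite /E /= => -[h1 h2]; lia.
by rewrite X_geom (probE (measurable_X _ _)) IH /= exprS; ring.
Qed.

Lemma prob_X_out_range i n :
  prob (X i @^-1` [set z | ~ (1 <= z <= n)%N]) = p ^+ n.
Proof.
set E := X i @^-1` [set z | (1 <= z <= n)%N].
have -> : X i @^-1` [set z | ~ (1 <= z <= n)%N] = ~` E by [].
rewrite /prob; have -> : P (~` E) = (1 - P E)%E by apply: probability_setC; exact: measurable_X.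
by rewrite (probE (measurable_X _ _)) prob_X_in_range /=; ring.
Qed.

Definition cylinder (B : bool * nat -> set nat) (F : seq (bool * nat)) : set Omega :=
  \bigcap_(x in [set` F]) (X x @^-1` B x).

Lemma cylinder_nil B : cylinder B [::] = setT.
Proof. by apply/seteqP; split => w //= _ x. Qed.

Lemma cylinder_cat B F1 F2 : cylinder B (F1 ++ F2) = cylinder B F1 `&` cylinder B F2.
Proof.
apply/seteqP; split => w /=.
  by move=> h; split => x hx; apply: h; rewrite /= mem_cat hx ?orbT.
by move=> [h1 h2] x /=; rewrite mem_cat => /orP[] hx; [apply: h1 | apply: h2].
Qed.

Lemma measurable_cylinder B F : measurable (cylinder B F).
Proof.
by apply: fin_bigcap_measurable => [|x _]; [exact: finite_seq | exact: measurable_X].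
Qed.

Lemma prob_cylinder B F : uniq F -> prob (cylinder B F) = \prod_(x <- F) prob (X x @^-1` B x).
Proof.
move=> uF; rewrite /prob /cylinder X_indep.2 //.
rewrite (eq_bigr (fun x => (prob (X x @^-1` B x))%:E)) ?prodEFin // => x _.
exact/probE/measurable_X.
Qed.

Definition block_room (s i : nat) : nat := ((i %/ s).+1 * s - i)%N.

Definition fits_block (s : nat) (x : bool * nat) : set nat :=
  [set z | (1 <= z <= block_room s x.2)%N].

Definition block (s k : nat) : seq (bool * nat) :=
  [seq (false, i) | i <- iota (k * s) s] ++ [seq (true, i) | i <- iota (k * s) s].

Definition good_block (s k : nat) : set Omega := cylinder (fits_block s) (block s k).

Definition no_good_block (s m : nat) : set Omega := \bigcap_(k < m) ~` good_block s k.

Definition large_step (s : nat) : set Omega :=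
  \bigcup_(i < s * s) (X (false, i) @^-1` [set z | ~ (1 <= z <= s)%N] `|`
                       X (true, i) @^-1` [set z | ~ (1 <= z <= s)%N]).

Lemma mem_block s k b i : ((b, i) \in block s k) = (i \in iota (k * s) s).
Proof.
rewrite mem_cat; apply/orP/idP => [[] /mapP[j hj [_ ->]] // | h].
by case: b; [right | left]; apply/mapP; exists i.
Qed.

Lemma block_uniq s k : uniq (block s k).
Proof.
rewrite cat_uniq !map_inj_uniq ?iota_uniq //= => [|a b [] //|a b [] //].
by rewrite andbT; apply/hasPn => x /mapP[i _ ->]; apply/mapP => -[j _ []].
Qed.

Lemma measurable_no_good_block s m : measurable (no_good_block s m).
Proof.
apply: fin_bigcap_measurable => [|k _]; first exact: finite_II.
exact/measurableC/measurable_cylinder.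
Qed.

Lemma measurable_large_step s : measurable (large_step s).
Proof.
apply: fin_bigcup_measurable => [|i _]; first exact: finite_II.
by apply: measurableU; exact: measurable_X.
Qed.

Lemma prod_block_room (f : nat -> R) s k : (0 < s)%N ->
  \prod_(i <- iota (k * s) s) f (block_room s i) = \prod_(0 <= m < s) f m.+1.
Proof.
move=> s0; rewrite -[(k * s)%N]addn0 iotaDl big_map.
rewrite (_ : iota 0 s = index_iota 0 s); last by rewrite /index_iota subn0.
rewrite big_nat_rev /=.
apply: eq_big_nat => i /andP[_ si]; rewrite /block_room add0n (divnMDl _ _ s0) divn_small.
  by congr f; lia.
lia.
Qed.

Lemma prob_good_block s k : (0 < s)%N ->
  prob (good_block s k) = (\prod_(0 <= m < s) (1 - p ^+ m.+1)) ^+ 2.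
Proof.
move=> s0; rewrite /good_block (prob_cylinder _ (block_uniq s k)) big_cat !big_map /=.
under eq_bigr do rewrite prob_X_in_range.
under [X in _ * X]eq_bigr do rewrite prob_X_in_range.
by rewrite (prod_block_room (fun n => 1 - p ^+ n)) // expr2.
Qed.

Lemma no_good_blockS s m :
  no_good_block s m.+1 = no_good_block s m `&` ~` good_block s m.
Proof. by rewrite /no_good_block !bigcap_mkord big_ord_recr. Qed.

(* The blocks are disjoint families of independent variables, so one can
   peel them off one at a time, keeping track of a cylinder on later indices. *)
Lemma prob_no_good_blockI s m F : uniq F -> (forall x, x \in F -> (m * s <= x.2)%N) ->
  prob (no_good_block s m `&` cylinder (fits_block s) F) =
  (\prod_(k < m) (1 - prob (good_block s k))) * prob (cylinder (fits_block s) F).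
Proof.
elim: m F => [|m IH] F uF F_late.
  by rewrite big_ord0 mul1r /no_good_block bigcap_mkord big_ord0 setTI.
have F_late' x : x \in F -> (m * s <= x.2)%N by move/F_late; rewrite mulSn; lia.
have uniq_mF : uniq (block s m ++ F).
  rewrite cat_uniq block_uniq uF andbT; apply/hasPn => -[b i] /F_late /= h.
  by rewrite mem_block mem_iota; lia.
have late_mF x : x \in block s m ++ F -> (m * s <= x.2)%N.
  by case: x => b i; rewrite mem_cat mem_block mem_iota => /orP[/andP[] | /F_late'].
have mC := measurable_cylinder (fits_block s) F.
rewrite no_good_blockS setIAC -setDE probD; last 2 first.
- exact: measurableI (measurable_no_good_block s m) mC.
- exact: measurable_cylinder.
rewrite -setIA (setIC _ (good_block _ _)) [good_block s m]/good_block -cylinder_cat.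
rewrite !IH // (prob_cylinder _ uniq_mF) big_cat /= -(prob_cylinder _ (block_uniq s m)).
by rewrite -(prob_cylinder _ uF) big_ord_recr /=; ring.
Qed.

Lemma prob_no_good_block_le s c : 0 < c ->
  (forall n, c <= \prod_(0 <= m < n) (1 - p ^+ m.+1)) ->
  prob (no_good_block s s) <= (1 - c ^+ 2) ^+ s.
Proof.
move=> c0 c_le; have probT : prob setT = 1 by rewrite /prob probability_setT.
rewrite -[no_good_block s s]setIT -(cylinder_nil (fits_block s)) prob_no_good_blockI //.
rewrite cylinder_nil probT mulr1.
rewrite -[s in X in _ <= X]card_ord -prodr_const ler_prod // => k _.
have s0 : (0 < s)%N by case: k => /= k; lia.
have := prob_le1 (measurable_cylinder (fits_block s) (block s k)).
rewrite -/(good_block s k) prob_good_block //.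
have := c_le s; set Q := \prod_(_ <= _ < _) _ => cQ Q1.
have : c ^+ 2 <= Q ^+ 2 by rewrite lerXn2r ?nnegrE //; lra.
lra.
Qed.

Lemma prob_large_step_le s : (P (large_step s) <= (2 * (s * s)%:R * p ^+ s)%:E)%E.
Proof.
set out := fun b i => X (b, i) @^-1` [set z | ~ (1 <= z <= s)%N].
have out_meas i : (i < s * s)%N -> measurable (out false i `|` out true i).
  by move=> _; apply: measurableU; exact: measurable_X.
rewrite /large_step bigcup_mkord; apply: le_trans (Boole_inequality P out_meas) _.
have pair_le i : (P (out false i `|` out true i) <= (2 * p ^+ s)%:E)%E.
  have U2 : (P (out false i `|` out true i) <= P (out false i) + P (out true i))%E.
    by apply: measureU2; exact: measurable_X.
  apply: le_trans U2 _.
  by rewrite !(probE (measurable_X _ _)) !prob_X_out_range -EFinD lee_fin; lra.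
apply: le_trans (lee_sum (index_enum 'I_(s * s)) (P := xpredT) (fun i _ => pair_le i)) _.
by rewrite sumEFin sumr_const card_ord lee_fin -[_ *+ _]mulr_natr mulrAC.
Qed.

Lemma joint_block_of_good_block s w : ~ large_step s w -> ~ no_good_block s s w ->
  exists2 j, (0 < j <= s * s)%N &
    joint_block (fun i => X (false, i) w) (fun i => X (true, i) w) j.
Proof.
move=> no_large /existsNP[k /not_implyP[/= ks /contrapT good_k]].
have s0 : (0 < s)%N by lia.
have fits b i : (i < k.+1 * s)%N -> (1 <= X (b, i) w <= k.+1 * s - i)%N.
  move=> ik; case: (leqP (k * s) i) => ki.
    have : (b, i) \in block s k by rewrite mem_block mem_iota; rewrite mulSn in ik; lia.
    move=> /good_k; rewrite /fits_block /block_room /=.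
    by rewrite -(subnKC ki) (divnMDl _ _ s0) divn_small //; rewrite mulSn in ik; lia.
  (* before the good block, steps are at most [s] and hence fit *)
  case: (boolP (1 <= X (b, i) w <= s)%N) => [|out]; first by rewrite mulSn; lia.
  exfalso; apply: no_large; exists i; first by rewrite /= (leq_trans ki) // leq_mul2r ltnW ?orbT.
  by case: b out => /negP out; [right | left].
exists (k.+1 * s)%N; first by rewrite muln_gt0 s0 leq_mul2r ks orbT.
by apply/and3P; split; [rewrite muln_gt0 s0 | apply: fixes_block_of_fits => i; exact: fits ..].
Qed.

Definition bad_event (s : nat) : set Omega := large_step s `|` no_good_block s s.

Lemma measurable_bad_event s : measurable (bad_event s).
Proof. exact/measurableU/measurable_no_good_block/measurable_large_step. Qed.

Lemma prob_bad_event_le s c : 0 < c ->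
  (forall n, c <= \prod_(0 <= m < n) (1 - p ^+ m.+1)) ->
  (P (bad_event s) <= (2 * (s * s)%:R * p ^+ s + (1 - c ^+ 2) ^+ s)%:E)%E.
Proof.
move=> c0 c_le.
have U2 : (P (bad_event s) <= P (large_step s) + P (no_good_block s s))%E.
  by apply: measureU2; [exact: measurable_large_step | exact: measurable_no_good_block].
apply: le_trans U2 _; rewrite EFinD leeD ?prob_large_step_le //.
by rewrite (probE (measurable_no_good_block _ _)) lee_fin prob_no_good_block_le.
Qed.

End BlockEvents.

(** * Second moment of T_1 *)

Lemma first_joint_block_sq_le (R : realType) (z z' : nat -> nat) (bad : set nat) :
  (forall s, ~ bad s -> exists2 j, (0 < j <= s * s)%N & joint_block z z' j) ->
  (first_joint_block R z z' * first_joint_block R z z' <=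
   \sum_(s <oo) ((s.+1 ^ 4)%:R * \1_bad s)%:E)%E.
Proof.
move=> good.
set u := fun s => ((s.+1 ^ 4)%:R * \1_bad s)%:E : \bar R.
have u0 s : (0 <= u s)%E by rewrite lee_fin mulr_ge0 ?indic_ge0.
have u_bad s : bad s -> u s = ((s.+1 ^ 4)%:R)%:E.
  by move=> bad_s; rewrite /u indicE mem_set // mulr1.
case: first_joint_blockP => [none | m jm m_min].
  have all_bad s : bad s by apply: contrapT => /good[j _ /none].
  suff -> : (\sum_(s <oo) u s = +oo)%E by rewrite mulyy.
  apply/eqyP => a _; apply: le_trans (nneseries_ge_term (Num.truncn a) u0).
  rewrite u_bad // lee_fin (le_trans (ltW (truncnS_gt a))) //.
  by rewrite ler_nat expnS leq_pmulr // expn_gt0.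
have m0 : (0 < m)%N by case/and3P: jm.
(* with r least such that m <= r^2, the index r - 1 is bad and r^4 >= m^2 *)
have [r m_le r_min] := ex_minnP (ex_intro (fun r => m <= r * r)%N m (leq_pmulr m m0)).
have r0 : (0 < r)%N by case: r m_le {r_min} => //; lia.
have bad_r : bad r.-1.
  apply: contrapT => /good[j /andP[_ j_le] /m_min m_j].
  by have := r_min _ (leq_trans m_j j_le); lia.
apply: le_trans (nneseries_ge_term r.-1 u0).
rewrite u_bad // -EFinM lee_fin -natrM ler_nat prednK // (expnM r 2 2).
by rewrite leq_mul // expnS expn1.
Qed.

Section Integrals.
Variables (d : measure_display) (T : measurableType d) (R : realType).
Variable mu : {measure set T -> \bar R}.

Lemma ge0_le_integralT (f g : T -> \bar R) :
  (forall x, (0 <= f x)%E) -> (forall x, (f x <= g x)%E) ->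
  (\int[mu]_x f x <= \int[mu]_x g x)%E.
Proof.
move=> f0 fg; have g0 x : (0 <= g x)%E by exact: le_trans (f0 x) (fg x).
rewrite !ge0_integralTE //; apply: le_ereal_sup => _ [h h_le <-].
by exists h => //= x; exact: le_trans (h_le x) (fg x).
Qed.

Lemma integral_series_indic (A : nat -> set T) (a : nat -> R) :
  (forall s, measurable (A s)) -> (forall s, 0 <= a s) ->
  (\int[mu]_x \sum_(s <oo) (a s * \1_(A s) x)%:E = \sum_(s <oo) (a s)%:E * mu (A s))%E.
Proof.
move=> mA a0; rewrite integral_nneseries //; last first.
- by move=> s x _; rewrite lee_fin mulr_ge0 ?indic_ge0.
- by move=> s; apply/measurable_EFinP/measurable_funM => //; exact: measurable_indic.
apply: eq_eseriesr => s _; under eq_integral do rewrite EFinM.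
rewrite ge0_integralZl_EFin ?integral_indic ?setIT //.
by apply/measurable_EFinP; exact: measurable_indic.
Qed.

End Integrals.

Lemma cvg_series_bad_bound (R : realType) (p r : R) : 0 <= p < 1 -> 0 <= r < 1 ->
  cvgn (series (fun s : nat => (s.+1 ^ 4)%:R * (2 * (s * s)%:R * p ^+ s + r ^+ s))).
Proof.
move=> p01 r01; have /andP[p0 _] := p01; have /andP[r0 _] := r01.
have := is_cvg_seriesD (is_cvg_seriesZ (k := 2) (cvg_series_poly_geometric (k := 6) p01))
  (cvg_series_poly_geometric (k := 4) r01).
apply: series_le_cvg => s.
- by rewrite mulr_ge0 ?addr_ge0 ?mulr_ge0 ?exprn_ge0.
- by rewrite !fctE addr_ge0 ?scaler_ge0 ?mulr_ge0 ?exprn_ge0.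
rewrite !fctE /GRing.scale /= mulrDr natrX lerD // -mulrA mulrCA ler_wpM2l // mulrA.
rewrite ler_wpM2r ?exprn_ge0 // (_ : 6 = 4 + 2)%N // exprD ler_wpM2l ?exprn_ge0 //.
by rewrite expr2 -natrM ler_nat leq_mul.
Qed.

Theorem lemma4p3 (R : realType) (q : R) (hq : 1 < q)
  (d : measure_display) (Omega : measurableType d) (P : probability Omega R)
  (Z Z' : nat -> Omega -> nat)
  (hind : mutually_independent P (join_family Z Z'))
  (hZ : forall i k, P (Z i @^-1` [set k]) = (geom_pmf q^-1 k)%:E)
  (hZ' : forall i k, P (Z' i @^-1` [set k]) = (geom_pmf q^-1 k)%:E) :
  let T1 := fun w => first_joint_block R (fun i => Z i w) (fun i => Z' i w) in
  (\int[P]_w (T1 w * T1 w) < +oo)%E.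
Proof.
pose T1 w := first_joint_block R (fun i => Z i w) (fun i => Z' i w).
change (\int[P]_w (T1 w * T1 w) < +oo)%E.
have q0 : 0 < q by exact: lt_trans hq.
have p01 : 0 <= q^-1 < 1 by rewrite invr_ge0 ltW //= invf_lt1.
set X := join_family Z Z'.
have X_geom i k : P (X i @^-1` [set k]) = (geom_pmf q^-1 k)%:E.
  by case: i => [[] i]; [exact: hZ' | exact: hZ].
have [c c0 c_le] := qpochhammer_bounded_below p01.
have r01 : 0 <= 1 - c ^+ 2 < 1.
  have := c_le 0%N; rewrite big_geq // expr2 => c1.
  by apply/andP; split; nra.
have T1_le w : (T1 w * T1 w <= \sum_(s <oo) ((s.+1 ^ 4)%:R * \1_(bad_event X s) w)%:E)%E.
  apply: (@first_joint_block_sq_le _ _ _ [set s | bad_event X s w]) => s not_bad.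
  by apply: (@joint_block_of_good_block _ _ X) => h; apply: not_bad; [left | right].
have T1_sq0 w : (0 <= T1 w * T1 w)%E by exact: first_joint_block_sq_ge0.
apply: le_lt_trans (ge0_le_integralT P T1_sq0 T1_le) _.
rewrite integral_series_indic => [|s|s]; last 2 first.
- exact: (measurable_bad_event hind s).
- exact: ler0n.
apply: le_lt_trans (series_EFin_lt_pinfty (cvg_series_bad_bound p01 r01)).
apply: lee_nneseries => [s _ _ | s _]; first by rewrite mule_ge0 ?lee_fin ?ler0n.
by rewrite EFinM lee_wpmul2l ?lee_fin ?ler0n // prob_bad_event_le.
Qed.
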